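(* Assume $V=L$. Let $\zeta\in\Xi$, $X\in\mathrm{IPS}_\zeta$, and let $A\subseteq X$ be a set which has the Baire property relative to $X$ and is not meager relative to $X$. Then there is $Y\in\mathrm{IPS}_\zeta$ with $Y\subseteq A$.
   Context: $T$ is the set of all nonempty finite sequences of countable ordinals, ordered by strict extension $\subset$. $\Xi$ is the set of all at most countable $\xi\subseteq T$ closed downward under $\subset$. $D=2^\omega$; $D^\xi$ is the product of $\xi$ copies of $D$ with the product topology; for $\eta\subseteq\xi$ and $x\in D^\xi$, $x\restriction\eta$ is the restriction. For $\zeta\in\Xi$, $\mathrm{IPS}_\zeta$ is the set of all $X\subseteq D^\zeta$ for which there is a homeomorphism $H$ of $D^\zeta$ onto $X$ such that for all $x_0,x_1\in D^\zeta$ and all $\xi\in\Xi$, $\xi\subseteq\zeta$: $x_0\restriction\xi=x_1\restriction\xi\iff H(x_0)\restriction\xi=H(x_1)\restriction\xi$. *)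

From HB Require Import structures.
From mathcomp Require Import all_boot all_order all_algebra.
From mathcomp Require Import all_classical topology cantor.
Set Implicit Arguments. Unset Strict Implicit. Unset Printing Implicit Defensive.
Local Open Scope classical_set_scope.

(* The role of omega_1 (the countable ordinals) is played by an arbitrary
   type [Om].  Elements of T are nonempty finite sequences. *)

Definition strict_ext {Om : Type} (s t : seq Om) : Prop :=
  exists u : seq Om, u <> [::] /\ t = s ++ u.

Definition in_Xi {Om : Type} (xi : set (seq Om)) : Prop :=
  [/\ countable xi,
      (forall s, xi s -> s <> [::]) &
      (forall s t, xi t -> strict_ext s t -> s <> [::] -> xi s)].

Definition D := cantor_space.

Definition Dpow {Om : Type} (zeta : set (seq Om)) : topologicalType :=
  prod_topology (fun _ : set_type zeta => D).

Definition restr_eq {Om : Type} (zeta xi : set (seq Om)) (x y : Dpow zeta) : Prop :=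
  forall t : set_type zeta, xi (set_val t) -> x t = y t.

Definition homeomorphism_onto {S S' : topologicalType} (H : S -> S') (X : set S') : Prop :=
  [/\ continuous H, injective H, H @` setT = X &
      (forall U : set S, open U -> exists V : set S', open V /\ H @` U = V `&` X)].

Definition IPS {Om : Type} (zeta : set (seq Om)) (X : set (Dpow zeta)) : Prop :=
  exists H : Dpow zeta -> Dpow zeta,
    homeomorphism_onto H X /\
    forall (x0 x1 : Dpow zeta) (xi : set (seq Om)),
      in_Xi xi -> xi `<=` zeta ->
      (restr_eq xi x0 x1 <-> restr_eq xi (H x0) (H x1)).

Definition nowhere_dense {S : topologicalType} (N : set S) : Prop :=
  interior (closure N) = set0.

Definition meager {S : topologicalType} (M : set S) : Prop :=
  exists N : nat -> set S, (forall n, nowhere_dense (N n)) /\ M `<=` \bigcup_n N n.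

Definition baire_property {S : topologicalType} (A : set S) : Prop :=
  exists U : set S, open U /\ meager ((A `\` U) `|` (U `\` A)).

(* relative to X : in the subspace topology of X (the type [set_type X]) *)
Definition rel_to {S : topologicalType} (X A : set S) : set (set_type X) :=
  fun x : set_type X => A (set_val x).

Definition meager_rel {S : topologicalType} (X A : set S) : Prop :=
  meager (@rel_to _ X A).

Definition baire_property_rel {S : topologicalType} (X A : set S) : Prop :=
  baire_property (@rel_to _ X A).

(** Pull [A] back along the homeomorphism [H : D^zeta -> X]: having the Baire
    property and not being meager, it contains [O \cap G_0 \cap G_1 \cap ...] for a
    nonempty open [O] and dense open [G_n].  It thus suffices to embed [D^zeta] into
    such a set by a map preserving equality of restrictions to every [xi] in [Xi].
    Enumerate [zeta] as [idx : zeta -> nat] and build the map by fusion: at stage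
    [k] the first bits of coordinate [t] of the image of [x] are fixed as a function
    of [x] on the initial segments of [t] only, and inputs that first differ at [t]
    get incomparable strings there.  Stage [k+1] extends all strings into [G_k]
    (finitely many cases, as only finitely many bits of the input matter) and then
    copies one more bit of the input.  The argument does not use V = L. *)

From HB Require Import structures.
From mathcomp Require Import all_boot all_order all_algebra.
From mathcomp Require Import all_classical topology cantor.
From mathcomp Require Import zify.
Set Implicit Arguments. Unset Strict Implicit. Unset Printing Implicit Defensive.
Local Open Scope classical_set_scope.

Lemma prod_topology_cvgP (I : Type) (K : I -> topologicalType)
    (F : set_system (prod_topology K)) (f : prod_topology K) : Filter F ->
  F --> f <-> forall i, (fun g : prod_topology K => g i) @ F --> f i.
Proof.
move=> FF; rewrite cvg_sup; split=> cvF i.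
- move=> A Afi; apply: cvF.
  exact: (@initial_continuous _ _ (fun g : prod_topology K => g i)).
- move=> A; rewrite (@nbhsE (initial_topology (fun g : prod_topology K => g i))) /=.
  move=> -[B [[B' oB' <-] B'fi] BA].
  by apply: filterS BA _; apply: cvF; exact: open_nbhs_nbhs.
Qed.

Lemma bool_cvgP (F : set_system bool) (b : bool) : Filter F ->
  F --> b <-> F [set c | c = b].
Proof.
move=> FF; split=> [cvF|Fb A /principal_filterP Ab]; first exact: cvF.
by apply: filterS Fb => c ->.
Qed.

Lemma nowhere_dense_closureC_dense (T : topologicalType) (N : set T) :
  nowhere_dense N -> dense (~` closure N).
Proof.
move=> ndN O [o Oo] oO; have [//|no_meet] := pselect (O `&` ~` closure N !=set0).
have : O `<=` (closure N)°.
  by rewrite -open_subsetE // => z Oz; apply: contra_notP no_meet => nNz; exists z.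
by rewrite ndN => /(_ o Oo).
Qed.

Lemma open_map_preimage_dense (S T : topologicalType) (g : S -> T) (D : set T) :
  (forall W, open W -> open (g @` W)) -> dense D -> dense (g @^-1` D).
Proof.
move=> gop dD W [w Ww] oW.
have [_ [[v Wv <-] Dgv]] := dD (g @` W) (ex_intro _ (g w) (ex_intro2 _ _ w Ww erefl)) (gop W oW).
by exists v.
Qed.

Lemma homeomorphism_onto_comp (S1 S2 S3 : topologicalType) (f : S1 -> S2) (g : S2 -> S3)
    (Y : set S3) :
  homeomorphism_onto f (range f) -> homeomorphism_onto g Y ->
  homeomorphism_onto (g \o f) (range (g \o f)).
Proof.
move=> [fc finj _ fop] [gc ginj gY gop]; split=> //.
- by move=> x; apply: continuous_comp; [exact: fc | exact: gc].
- exact: inj_comp.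
- move=> U oU; have [V1 [oV1 fU]] := fop U oU; have [V2 [oV2 gV1]] := gop V1 oV1.
  exists V2; split=> //; apply/seteqP; split=> [_ [x Ux <-]|z [V2z [x _ fxz]]].
    split; last by exists x.
    have [] : (V1 `&` range f) (f x) by rewrite -fU; exists x.
    by move=> V1fx _; have [] : (V2 `&` Y) (g (f x)) by rewrite -gV1; exists (f x).
  have [w V1w gw] : (g @` V1) z by rewrite gV1; split=> //; rewrite -gY -fxz; exists (f x).
  have wfx : w = f x by apply: ginj; rewrite gw.
  have [x' Ux' fx'] : (f @` U) (f x) by rewrite fU; split; [rewrite -wfx | exists x].
  by exists x' => //=; rewrite fx' -wfx.
Qed.

Lemma homeomorphism_onto_corestrict (S T : topologicalType) (H : S -> T) (X : set T) :
  homeomorphism_onto H X -> exists g : S -> set_type X,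
    [/\ forall z, set_val (g z) = H z, continuous g,
        (forall W, open W -> open (g @` W)) & forall u, exists z, g z = u].
Proof.
move=> [Hc _ HX Hop]; have XH z : X (H z) by rewrite -HX; exists z.
exists (fun z => exist _ (H z) (mem_set (XH z))); split=> //.
- by apply: (@continuous_comp_initial _ _ _ set_val).
- move=> W oW; have [V [oV HW]] := Hop W oW.
  suff -> : [set exist _ (H z) (mem_set (XH z)) | z in W] = set_val @^-1` V.
    by move: oV; apply: (proj1 (continuousP _)); exact: initial_continuous.
  apply/seteqP; split=> [_ [w Ww <-]|u Vu].
    by have [] : (V `&` X) (H w) by rewrite -HW; exists w.
  have [w Ww Hw] : (H @` W) (set_val u) by rewrite HW; split=> //; exact: set_mem (valP u).
  by exists w => //; apply: val_inj.
- move=> u; have [z _ Hz] : (H @` setT) (set_val u) by rewrite HX; exact: set_mem (valP u).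
  by exists z; apply: val_inj.
Qed.

Lemma prefix_nth (T : eqType) (x0 : T) (s s' : seq T) i :
  prefix s s' -> i < size s -> nth x0 s' i = nth x0 s i.
Proof. by case/prefixP => u -> lt_i; rewrite nth_cat lt_i. Qed.

Lemma prefix_mkseq (T : eqType) (c : nat -> T) a b :
  a <= b -> prefix (mkseq c a) (mkseq c b).
Proof. by move=> ab; rewrite prefixE size_mkseq -map_take take_iota (minn_idPl ab). Qed.

Definition initial_seg (s : seq bool) (c : nat -> bool) :=
  forall i, i < size s -> nth false s i = c i.

Definition diverge (s s' : seq bool) :=
  exists i, [/\ i < size s, i < size s' & nth false s i != nth false s' i].

Lemma initial_seg_mkseq s c : initial_seg s c -> s = mkseq c (size s).
Proof.
move=> sc; apply: (@eq_from_nth _ false); rewrite ?size_mkseq // => i lt_i.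
by rewrite nth_mkseq // sc.
Qed.

Lemma initial_seg_prefix s s' c : prefix s s' -> initial_seg s' c -> initial_seg s c.
Proof.
move=> ss' s'c i lt_i; rewrite -(prefix_nth _ ss' lt_i) s'c //.
exact: leq_trans lt_i (size_prefix ss').
Qed.

Lemma diverge_prefix s1 s2 s1' s2' :
  diverge s1 s2 -> prefix s1 s1' -> prefix s2 s2' -> diverge s1' s2'.
Proof.
move=> [i [i1 i2 neq]] p1 p2; exists i; split.
- exact: leq_trans i1 (size_prefix p1).
- exact: leq_trans i2 (size_prefix p2).
- by rewrite (prefix_nth _ p1 i1) (prefix_nth _ p2 i2).
Qed.

Lemma initial_seg_diverge s s' c : initial_seg s c -> initial_seg s' c -> ~ diverge s s'.
Proof. by move=> sc s'c [i [i1 i2]]; rewrite sc // s'c // eqxx. Qed.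

Section Fusion.
Variables (Om : Type) (zeta : set (seq Om)).
Local Notation node := (set_type zeta).
Local Notation point := (Dpow zeta).

Lemma Dpow_cvgP (F : set_system point) (x : point) : Filter F ->
  F --> x <-> forall t i, F [set y : point | y t i = x t i].
Proof.
move=> FF; rewrite prod_topology_cvgP; split=> cvF t.
- by move=> i; move/prod_topology_cvgP : (cvF t) => /(_ i) /bool_cvgP.
- by apply/prod_topology_cvgP => i; apply/bool_cvgP; exact: cvF.
Qed.

Lemma nbhs_coord (x : point) t i : nbhs x [set y : point | y t i = x t i].
Proof. by move/Dpow_cvgP : (@cvg_id _ (nbhs x)); apply. Qed.

Variables (idx : node -> nat) (idx_inj : injective idx).

(* Truncated subtraction: nodes of index at least [k] are not examined. *)
Definition agree k (P : set node) (x y : point) :=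
  forall s, P s -> forall i, i < k - idx s -> x s i = y s i.

Lemma agree_mono k k' (P P' : set node) x y : k <= k' -> P `<=` P' ->
  agree k' P' x y -> agree k P x y.
Proof. by move=> kk' PP' xy s /PP' Ps i ik; apply: xy => //; lia. Qed.

Lemma agree_sym k P x y : agree k P x y -> agree k P y x.
Proof. by move=> xy s Ps i ik; rewrite xy. Qed.

Lemma agree_trans k P x y z : agree k P x y -> agree k P y z -> agree k P x z.
Proof. by move=> xy yz s Ps i ik; rewrite xy // yz. Qed.

Lemma nbhs_agree k (x : point) : nbhs x [set y | agree k setT y x].
Proof.
pose near_at (p : 'I_k * 'I_k) := [set y : point |
  forall s, idx s = p.1 -> p.2 < k - p.1 -> y s p.2 = x s p.2].
have near_all p : nbhs x (near_at p).
  case: p => j i /=.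
  have [[s0 s0j]|no_s] := pselect (exists s, idx s = j).
    apply: filterS (nbhs_coord x s0 i) => y y_s0 s sj _.
    by rewrite (idx_inj (etrans sj (esym s0j))).
  by apply: filterS filterT => y _ s sj; case: no_s; exists s.
apply: filterS (@filter_forall point _ near_at (nbhs x) _ near_all) => y near_y s _ i ik.
have [sk ik'] : idx s < k /\ i < k by lia.
exact: (near_y (Ordinal sk, Ordinal ik')).
Qed.

Lemma nbhs_agreeP (x : point) (U : set point) :
  nbhs x U <-> exists k, [set y | agree k setT y x] `<=` U.
Proof.
split=> [xU|[k /filterS]]; last by apply; exact: nbhs_agree.
pose balls := filter_from setT (fun k => [set y | agree k setT y x]).
have balls_filter : Filter balls.
  apply: filter_from_filter => [|k l _ _]; first by exists 0.
  by exists (maxn k l) => // y kl; split; apply: agree_mono kl; rewrite ?leq_maxl ?leq_maxr.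
have : balls --> x.
  apply/Dpow_cvgP => t i; exists (i.+1 + idx t) => // y yx.
  by apply: yx => //; lia.
by move/(_ U xU) => -[k _ kU]; exists k.
Qed.

Definition cylinder (tau : node -> seq bool) : set point :=
  [set z | forall t, initial_seg (tau t) (z t)].

Definition bounded_by m (tau : node -> seq bool) := forall t, size (tau t) <= m - idx t.

Lemma cylinder_prefix (tau tau' : node -> seq bool) :
  (forall t, prefix (tau t) (tau' t)) -> cylinder tau' `<=` cylinder tau.
Proof. by move=> tau_tau' z z_tau' t; apply: initial_seg_prefix (z_tau' t). Qed.

Lemma cylinder_agree m tau (y z : point) :
  bounded_by m tau -> cylinder tau z -> agree m setT y z -> cylinder tau y.
Proof.
move=> tau_m z_tau yz t i lt_i; rewrite z_tau // yz //.
exact: leq_trans lt_i (tau_m t).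
Qed.

Lemma open_cylinder m tau : bounded_by m tau -> open (cylinder tau).
Proof.
move=> tau_m; rewrite openE => z z_tau; apply/nbhs_agreeP; exists m => y.
exact: cylinder_agree.
Qed.

Definition subcylinder_in (G : set point) (tau : node -> seq bool) :=
  exists m' tau', [/\ bounded_by m' tau', forall t, prefix (tau t) (tau' t)
                    & cylinder tau' `<=` G].

Lemma nbhs_subcylinder m tau (z : point) (G : set point) :
  bounded_by m tau -> cylinder tau z -> nbhs z G -> subcylinder_in G tau.
Proof.
move=> tau_m z_tau /nbhs_agreeP [k kG]; pose n := maxn m k.
exists n, (fun t => mkseq (z t) (n - idx t)); split.
- by move=> t; rewrite size_mkseq.
- move=> t; rewrite (initial_seg_mkseq (z_tau t)); apply: prefix_mkseq.
  by have := tau_m t; lia.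
- move=> y y_tau'; apply: kG => s _ i lt_i.
  have lt_in : i < n - idx s by lia.
  by rewrite -(y_tau' s i) ?size_mkseq ?nth_mkseq.
Qed.

Definition cyl_dense (G : set point) :=
  forall m tau, bounded_by m tau -> subcylinder_in G tau.

Lemma open_dense_cyl_dense (G : set point) : open G -> dense G -> cyl_dense G.
Proof.
move=> oG dG m tau tau_m.
have [|z [z_tau Gz]] := dG (cylinder tau) _ (open_cylinder tau_m).
  by exists (fun t i => nth false (tau t) i).
by apply: nbhs_subcylinder tau_m z_tau _; exact: open_nbhs_nbhs.
Qed.

Definition node_prefix (s t : node) := exists u, set_val t = set_val s ++ u.

Definition node_sprefix (s t : node) := strict_ext (set_val s) (set_val t).

Lemma node_prefix_refl t : node_prefix t t.
Proof. by exists [::]; rewrite cats0. Qed.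

Lemma node_prefix_cases s t : node_prefix s t -> s = t \/ node_sprefix s t.
Proof.
case=> -[|a u] st; last by right; exists (a :: u).
by left; apply: val_inj; move: st; rewrite cats0 => st; exact: esym st.
Qed.

Lemma node_sprefix_size s t :
  node_sprefix s t -> size (set_val s) < size (set_val t).
Proof. by case=> -[|a u] [// _ ->]; rewrite size_cat /=; lia. Qed.

(* [sg t x] is the part of coordinate [t] of the image of [x] fixed at stage [k]. *)
Record scheme_at k (sg : node -> point -> seq bool) : Prop := {
  scheme_local : forall t x y, agree k (node_prefix^~ t) x y -> sg t x = sg t y;
  scheme_sep : forall t x y, agree k (node_sprefix^~ t) x y ->
    ~ agree k [set t] x y -> diverge (sg t x) (sg t y);
  scheme_long : forall t x, k - idx t <= size (sg t x);
  scheme_bounded : exists m, forall x, bounded_by m (sg^~ x) }.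

Definition extends (sg sg' : node -> point -> seq bool) :=
  forall t x, prefix (sg t x) (sg' t x).

Lemma extends_refl sg : extends sg sg.
Proof. by move=> t x; exact: prefix_refl. Qed.

Lemma extends_trans sg1 sg2 sg3 : extends sg1 sg2 -> extends sg2 sg3 -> extends sg1 sg3.
Proof. by move=> e12 e23 t x; apply: prefix_trans (e12 t x) (e23 t x). Qed.

Lemma scheme0 m tau : bounded_by m tau -> scheme_at 0 (fun t (_ : point) => tau t).
Proof.
move=> tau_m; split=> // [t x y _ nxy|]; last by exists m.
by case: nxy => s _ i; rewrite sub0n.
Qed.

Lemma scheme_agree k sg (P : set node) x y : scheme_at k sg ->
  (forall s t, P t -> node_sprefix s t -> P s) ->
  (forall t, P t -> ~ diverge (sg t x) (sg t y)) -> agree k P x y.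
Proof.
move=> sg_k P_down P_comp.
suff agree_below n s : size (set_val s) < n -> P s -> agree k [set s] x y.
  by move=> s Ps; apply: (agree_below (size (set_val s)).+1 s) => // _ ->.
elim: n s => // n IH s s_n Ps.
have [//|nxy] := pselect (agree k [set s] x y).
case: (P_comp s Ps); apply: (scheme_sep sg_k) nxy => s' s's.
apply: (IH s' _ (P_down _ _ Ps s's) s' erefl).
by have := node_sprefix_size s's; lia.
Qed.

Definition split_at k (sg : node -> point -> seq bool) t x :=
  sg t x ++ (if idx t <= k then [:: x t (k - idx t)] else [::]).

Lemma extends_split k sg : extends sg (split_at k sg).
Proof. by move=> t x; exact: prefix_prefix. Qed.

Lemma agree_succ_single k t x y : agree k [set t] x y -> ~ agree k.+1 [set t] x y ->
  idx t <= k /\ x t (k - idx t) <> y t (k - idx t).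
Proof.
move=> xy nxy; apply: contra_notP nxy => not_new _ -> i lt_i.
have [lt_ik|ge_ik] := ltnP i (k - idx t); first exact: xy.
have [tk ->] : idx t <= k /\ i = k - idx t by lia.
by apply: contra_notP not_new => neq.
Qed.

Lemma scheme_split k sg : scheme_at k sg -> scheme_at k.+1 (split_at k sg).
Proof.
case=> loc sep long [m sg_m]; split.
- move=> t x y xy; rewrite /split_at (loc t x y); last exact: agree_mono xy.
  case: ifP => // tk; congr (_ ++ [:: _]).
  by apply: xy; [exact: node_prefix_refl | lia].
- move=> t x y xy nxy.
  have [xy_k|nxy_k] := pselect (agree k [set t] x y); last first.
    apply: diverge_prefix (extends_split _ _ _ _) (extends_split _ _ _ _).
    by apply: sep nxy_k; apply: agree_mono xy.
  have [tk neq] := agree_succ_single xy_k nxy.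
  have same : sg t x = sg t y.
    apply: loc => s /node_prefix_cases [->|st] i lt_i; first exact: xy_k.
    by apply: xy => //; lia.
  exists (size (sg t x)); rewrite /split_at tk !size_cat /= !nth_cat -same ltnn subnn.
  by split; rewrite ?addn1 //; apply/eqP.
- move=> t x; rewrite /split_at size_cat; have := long t x.
  by case: (leqP (idx t) k) => /= tk; lia.
- exists (maxn m k).+1 => x t; rewrite /split_at size_cat.
  by have := sg_m x t; case: (leqP (idx t) k) => /= tk; lia.
Qed.

Lemma scheme_shrink_class k sg (G : set point) (r : point) :
  scheme_at k sg -> cyl_dense G -> exists sg', [/\ scheme_at k sg', extends sg sg'
    & forall x, agree k setT x r -> cylinder (sg'^~ x) `<=` G].
Proof.
case=> loc sep long [m sg_m] G_dense.
have [m' [tau [tau_m' sg_tau tauG]]] := G_dense m _ (sg_m r).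
(* Only inputs agreeing with [r] on the initial segments of [t] are redirected
   at [t], which keeps [sg'] local. *)
pose sg' t x := if pselect (agree k (node_prefix^~ t) x r) then tau t else sg t x.
have ext : extends sg sg'.
  move=> t x; rewrite /sg'; case: pselect => [xr|nxr]; last exact: prefix_refl.
  by rewrite (loc t x r xr).
exists sg'; split=> //; first split.
- move=> t x y xy; rewrite /sg'; case: pselect => xr; case: pselect => yr //.
  + by case: yr; apply: agree_trans (agree_sym xy) xr.
  + by case: xr; apply: agree_trans xy yr.
  + exact: loc.
- by move=> t x y xy nxy; apply: diverge_prefix (ext t x) (ext t y); apply: sep.
- by move=> t x; apply: leq_trans (long t x) (size_prefix (ext t x)).
- exists (maxn m m') => x t; rewrite /sg'.
  by case: pselect => xr /=; [have := tau_m' t | have := sg_m x t]; lia.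
- move=> x xr z z_x; apply: tauG => t; have := z_x t; rewrite /sg'.
  by case: pselect => // -[]; apply: agree_mono xr.
Qed.

(* Entry [(j, i)] is bit [i] of the node of index [j]: equal codes mean agreement
   at level [k], so there are finitely many level-[k] classes. *)
Definition level_code k (x : point) : {ffun 'I_k * 'I_k -> bool} :=
  [ffun p : 'I_k * 'I_k => if pselect (exists s, idx s = p.1) is left ex
                           then x (sval (cid ex)) p.2 else false].

Lemma level_code_agree k x y : level_code k x = level_code k y -> agree k setT x y.
Proof.
move=> xy s _ i lt_i; have [sk ik] : idx s < k /\ i < k by lia.
have := congr1 (fun c : {ffun _ -> bool} => c (Ordinal sk, Ordinal ik)) xy.
rewrite !ffunE /=.
case: pselect => [ex /=|[]]; last by exists s.
by rewrite (idx_inj (svalP (cid ex))).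
Qed.

Lemma scheme_shrink k sg (G : set point) : scheme_at k sg -> cyl_dense G ->
  exists sg', [/\ scheme_at k sg', extends sg sg' & forall x, cylinder (sg'^~ x) `<=` G].
Proof.
move=> sg_k G_dense.
have shrink_codes (cs : seq {ffun 'I_k * 'I_k -> bool}) : exists sg', [/\ scheme_at k sg',
    extends sg sg' & forall x, level_code k x \in cs -> cylinder (sg'^~ x) `<=` G].
  elim: cs => [|c cs [sg1 [sg1_k ext1 sg1G]]]; first by exists sg; split=> //; exact: extends_refl.
  have [[r rc]|no_r] := pselect (exists r, level_code k r = c); last first.
    exists sg1; split=> // x; rewrite inE => /orP [/eqP xc|]; last exact: sg1G.
    by case: no_r; exists x.
  have [sg2 [sg2_k ext2 sg2G]] := scheme_shrink_class r sg1_k G_dense.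
  exists sg2; split=> //; first exact: extends_trans ext1 ext2.
  move=> x; rewrite inE => /orP [/eqP xc|/sg1G x_G].
    by apply: sg2G; apply: level_code_agree; rewrite xc rc.
  by apply: subset_trans x_G; apply: cylinder_prefix => t; exact: ext2.
have [sg' [sg'_k ext sg'G]] := shrink_codes (enum {ffun 'I_k * 'I_k -> bool}).
by exists sg'; split=> // x; apply: sg'G; rewrite mem_enum.
Qed.

Lemma scheme_step k sg (G : set point) : scheme_at k sg -> cyl_dense G ->
  exists sg', [/\ scheme_at k.+1 sg', extends sg sg' & forall x, cylinder (sg'^~ x) `<=` G].
Proof.
move=> sg_k G_dense; have [sg1 [sg1_k ext1 sg1G]] := scheme_shrink sg_k G_dense.
exists (split_at k sg1); split; first exact: scheme_split.
- exact: extends_trans ext1 (extends_split k sg1).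
- move=> x; apply: subset_trans (sg1G x); apply: cylinder_prefix => t.
  exact: extends_split.
Qed.

Lemma fusion_sequence (Gs : nat -> set point) m tau0 :
  (forall n, cyl_dense (Gs n)) -> bounded_by m tau0 ->
  exists S : nat -> node -> point -> seq bool,
    [/\ forall k, scheme_at k (S k), forall k, extends (S k) (S k.+1),
        forall k x, cylinder (S k.+1 ^~ x) `<=` Gs k & forall t x, S 0 t x = tau0 t].
Proof.
move=> Gs_dense tau0_m.
have step k sg : exists sg', scheme_at k sg -> [/\ scheme_at k.+1 sg', extends sg sg'
    & forall x, cylinder (sg'^~ x) `<=` Gs k].
  have [sg_k|] := pselect (scheme_at k sg); last by exists sg.
  by have [sg' ?] := scheme_step sg_k (Gs_dense k); exists sg'.
pose next k := projT1 (choice (step k)).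
have nextP k : forall sg, _ := projT2 (choice (step k)).
pose fix S k := if k is k'.+1 then next k' (S k') else fun t (_ : point) => tau0 t.
have S_scheme k : scheme_at k (S k).
  by elim: k => [|k IH]; [exact: scheme0 tau0_m | have [] := nextP k _ IH].
by exists S; split=> // k; have [] := nextP k _ (S_scheme k).
Qed.

Section FusionMap.
Variable S : nat -> node -> point -> seq bool.
Hypothesis S_scheme : forall k, scheme_at k (S k).
Hypothesis S_extends : forall k, extends (S k) (S k.+1).

(* Bit [i] of coordinate [t] is already fixed at stage [i.+1 + idx t]. *)
Definition fusion_map (x : point) : point :=
  fun t i => nth false (S (i.+1 + idx t) t x) i.

Lemma extends_le k n : k <= n -> extends (S k) (S n).
Proof.
elim: n => [|n IH]; first by rewrite leqn0 => /eqP ->; exact: extends_refl.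
rewrite leq_eqVlt => /orP [/eqP ->|/IH Skn]; first exact: extends_refl.
exact: extends_trans Skn (S_extends n).
Qed.

Lemma fusion_map_initial_seg k t x : initial_seg (S k t x) (fusion_map x t).
Proof.
move=> i lt_i; rewrite /fusion_map; set n := i.+1 + idx t.
have lt_in : i < size (S n t x) by have := scheme_long (S_scheme n) t x; lia.
rewrite -(prefix_nth _ (extends_le (leq_maxl k n) t x) lt_i).
by rewrite -(prefix_nth _ (extends_le (leq_maxr k n) t x) lt_in).
Qed.

Lemma fusion_map_agree k (P : set node) x y :
  (forall s t, P t -> node_prefix s t -> P s) ->
  agree k P x y -> agree k P (fusion_map x) (fusion_map y).
Proof.
move=> P_down xy t Pt i lt_i; rewrite /fusion_map (@scheme_local _ _ (S_scheme _) t x y) //.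
by move=> s st j lt_j; apply: xy; [exact: P_down Pt st | lia].
Qed.

Lemma fusion_map_agree_inv k (P : set node) x y :
  (forall s t, P t -> node_sprefix s t -> P s) ->
  (forall t, P t -> fusion_map x t = fusion_map y t) -> agree k P x y.
Proof.
move=> P_down xy; apply: scheme_agree (S_scheme k) P_down _ => t Pt.
have := @fusion_map_initial_seg k t y; rewrite -xy // => y_seg.
exact: initial_seg_diverge (@fusion_map_initial_seg k t x) y_seg.
Qed.

Lemma fusion_map_continuous : continuous fusion_map.
Proof.
move=> x U /nbhs_agreeP [k kU]; apply/nbhs_agreeP; exists k => y yx.
by apply: kU; apply: fusion_map_agree.
Qed.

Lemma fusion_map_open (U : set point) : open U ->
  exists V, open V /\ fusion_map @` U = V `&` range fusion_map.
Proof.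
move=> oU; pose balls := [set xk : point * nat |
  U xk.1 /\ [set y | agree xk.2 setT y xk.1] `<=` U].
exists (\bigcup_(xk in balls) cylinder (S xk.2 ^~ xk.1)); split.
  apply: bigcup_open => -[x k] _; have [m Sm] := scheme_bounded (S_scheme k).
  exact: open_cylinder (Sm x).
apply/seteqP; split=> [_ [x Ux <-]|z [[[x k] [Ux kU] z_x] [y _ yz]]].
  have [k kU] := (nbhs_agreeP x U).1 (open_nbhs_nbhs (conj oU Ux)).
  split; last by exists x.
  by exists (x, k) => //=; move=> t; exact: fusion_map_initial_seg.
exists y => //; apply: kU; apply: scheme_agree (S_scheme k) _ _ => // t _.
have := @fusion_map_initial_seg k t y; rewrite yz => y_seg.
exact: initial_seg_diverge y_seg (z_x t).
Qed.

Lemma fusion_map_restr (P : set node) x y :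
  (forall s t, P t -> node_sprefix s t -> P s) ->
  (forall t, P t -> x t = y t) <-> (forall t, P t -> fusion_map x t = fusion_map y t).
Proof.
move=> P_down; split=> xy t Pt; apply/funext => i.
  apply: (@fusion_map_agree (i.+1 + idx t) P) => //; last lia.
    by move=> s t' Pt' /node_prefix_cases [->|]; [|exact: P_down].
  by move=> s Ps j _; rewrite xy.
by apply: (@fusion_map_agree_inv (i.+1 + idx t) P) => //; lia.
Qed.

Lemma fusion_map_inj : injective fusion_map.
Proof.
move=> x y xy; apply/funext => t.
have [_ fusion_inv] := @fusion_map_restr setT x y (fun _ _ _ _ => I).
by apply: fusion_inv => // t' _; rewrite xy.
Qed.

Lemma IPS_range_fusion_map : (forall s : node, set_val s <> [::]) -> IPS (range fusion_map).
Proof.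
move=> node_ne; exists fusion_map; split.
  split=> //; [exact: fusion_map_continuous | exact: fusion_map_inj | exact: fusion_map_open].
move=> x y xi [_ _ xi_down] _.
apply: (fusion_map_restr (P := fun t => xi (set_val t))) => s t xit st.
by apply: (xi_down _ _ xit st); exact: node_ne.
Qed.

End FusionMap.
End Fusion.

Lemma IPS_image (Om : Type) (zeta : set (seq Om)) (H : Dpow zeta -> Dpow zeta)
    (X Y : set (Dpow zeta)) :
  homeomorphism_onto H X ->
  (forall x0 x1 xi, in_Xi xi -> xi `<=` zeta ->
     restr_eq xi x0 x1 <-> restr_eq xi (H x0) (H x1)) ->
  IPS Y -> IPS (H @` Y).
Proof.
move=> hH H_restr [G [hG G_restr]]; exists (H \o G); split.
  case: (hG) => _ _ GY _; rewrite -GY image_comp.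
  by apply: homeomorphism_onto_comp hH; rewrite GY.
by move=> x0 x1 xi xiX xiz; apply: iff_trans (G_restr _ _ _ xiX xiz) (H_restr _ _ _ xiX xiz).
Qed.

Theorem IPS_subset_comeager (Om : Type) (zeta : set (seq Om)) (O : set (Dpow zeta))
    (Gs : nat -> set (Dpow zeta)) :
  in_Xi zeta -> open O -> O !=set0 -> (forall n, open (Gs n)) -> (forall n, dense (Gs n)) ->
  exists Y, IPS Y /\ Y `<=` O `&` \bigcap_n Gs n.
Proof.
case=> /countable_injP [f f_inj] zeta_ne _ oO [z0 Oz0] oGs dGs.
pose idx (t : set_type zeta) := f (set_val t).
have idx_inj : injective idx.
  by move=> s t st; apply: val_inj; apply: f_inj => //; exact: valP.
have [m [tau0 [tau0_m _ tau0O]]] : subcylinder_in idx O (fun _ => [::]).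
  by apply: (nbhs_subcylinder idx_inj (m := 0) (z := z0)) => //; exact: open_nbhs_nbhs.
have Gs_dense n := open_dense_cyl_dense idx_inj (oGs n) (dGs n).
have [S [S_scheme S_ext SG S0]] := fusion_sequence idx_inj Gs_dense tau0_m.
exists (range (fusion_map idx S)); split.
- apply: (IPS_range_fusion_map idx_inj S_scheme S_ext) => s.
  by apply: zeta_ne; exact: set_mem (valP s).
- move=> _ [x _ <-]; split.
    by apply: tau0O => t; rewrite -(S0 t x); apply: (fusion_map_initial_seg S_scheme S_ext).
  by move=> n _; apply: (SG n x) => t; apply: (fusion_map_initial_seg S_scheme S_ext).
Qed.

Theorem corollary3p10 (Om : Type) (zeta : set (seq Om)) (X A : set (Dpow zeta)) :
  in_Xi zeta -> IPS X -> A `<=` X ->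
  baire_property_rel X A -> ~ meager_rel X A ->
  exists Y : set (Dpow zeta), IPS Y /\ Y `<=` A.
Proof.
move=> hz [H [hH H_restr]] _ [U [oU [N [ndN cover]]]] nmA.
have [g [gH gc gop gsurj]] := homeomorphism_onto_corestrict hH.
have [u Uu] : U !=set0.
  apply: contra_notP nmA => noU; exists N; split=> // a Aa.
  by apply: cover; left; split=> // Ua; apply: noU; exists a.
have [z0 gz0] := gsurj u.
have g_open V : open V -> open (g @^-1` V) by apply: (proj1 (continuousP _)).
have [|||Y [IPS_Y YUN]] := @IPS_subset_comeager _ zeta (g @^-1` U)
  (fun n => g @^-1` ~` closure (N n)) hz (g_open _ oU).
- by exists z0; rewrite /= gz0.
- by move=> n; apply: g_open; rewrite openC; exact: closed_closure.
- by move=> n; apply: open_map_preimage_dense gop _; exact: nowhere_dense_closureC_dense.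
exists (H @` Y); split; first exact: IPS_image hH H_restr IPS_Y.
move=> _ [y Yy <-]; have [Uy gyN] := YUN y Yy.
have [|gy_nA] := pselect (rel_to A (g y)); first by rewrite /rel_to gH.
have [n _ Ngy] := cover (g y) (or_intror (conj Uy gy_nA)).
by case: (gyN n I); exact: subset_closure Ngy.
Qed.
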